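(* Let $A$ be a vertex of a phylogenetic quiver $\mathcal O$, let $B$ be a vertex of the clade $\mathcal O_A$, and set $m=h(A)$, $n=h(B)$ (so $n\ge m$). If $p^{n-m}([B])=[A]$, then $B$ is a phylogenetic vertex of $\mathcal O_A$ and $h_A(B)=n-m$.
   Context: A quiver consists of a class of vertices and, for each ordered pair of vertices $(A,B)$, a set of edges $A\to B$ (loops and multiple edges allowed). An evolution of length $m\ge 0$ is a sequence $A_0\leftarrow A_1\leftarrow\cdots\leftarrow A_m$ of vertices together with edges $A_k\to A_{k-1}$ ($1\le k\le m$); $A_0$ is its initial and $A_m$ its terminal vertex. Write $A\le B$ ($A$ is an ancestor of $B$, $B$ a descendant of $A$) if there is an evolution with initial vertex $A$ and terminal vertex $B$; $A,B$ are isotypic ($A\sim B$) if $A\le B$ and $B\le A$. A vertex $A$ is primitive if every ancestor of $A$ is isotypic to $A$. A full evolution for $X$ is an evolution with primitive initial vertex and terminal vertex $X$. The height $h(X)$ is the smallest length of a full evolution for $X$ ($\infty$ if none). An evolution $\alpha=(A_0\leftarrow\cdots\leftarrow A_m)$ embeds in $\beta=(B_0\leftarrow\cdots\leftarrow B_n)$ if $m\le n$ and there are $0\le r_0<\cdots<r_m\le n$ with $A_k\sim B_{r_k}$. A universal evolution for $X$ is a full evolution for $X$ embedding in every full evolution for $X$; $X$ is phylogenetic if one exists. A quiver is monotonous if $h(A)\ge h(B)$ for every edge $A\to B$; small if its isotypy classes form a set; phylogenetic if small, monotonous, and all vertices phylogenetic. For a phylogenetic quiver, $[A]$ denotes the isotypy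 class of $A$, $\mathcal O_m$ the set of isotypy classes of vertices of height $m$, and for $m\ge1$ the parental map $p:\mathcal O_m\to\mathcal O_{m-1}$ is $p([A])=[A_{m-1}]$ where $A_0\leftarrow\cdots\leftarrow A_{m-1}\leftarrow A_m=A$ is any universal evolution for $A$ (well defined); $p^0$ is the identity. The clade $\mathcal O_A$ is the quiver formed by all descendants of $A$ in $\mathcal O$ and all edges between them; $h_A$ denotes height computed in $\mathcal O_A$, and phylogeneticity in $\mathcal O_A$ is likewise computed within $\mathcal O_A$. *)

From Stdlib Require Import Arith.

Record quiver := Quiver {
  vert : Type;
  (* edge A B : there is at least one edge A -> B *)
  edge : vert -> vert -> Prop
}.

Section Q.
Variable Q : quiver.

Definition evolution (m : nat) (f : nat -> vert Q) : Prop :=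
  forall k, 1 <= k <= m -> edge Q (f k) (f (k - 1)).

Definition ancestor (A B : vert Q) : Prop :=
  exists m f, evolution m f /\ f 0 = A /\ f m = B.

Definition isotypic (A B : vert Q) : Prop := ancestor A B /\ ancestor B A.

Definition primitive (A : vert Q) : Prop :=
  forall B, ancestor B A -> isotypic B A.

Definition full_evolution (X : vert Q) (m : nat) (f : nat -> vert Q) : Prop :=
  evolution m f /\ primitive (f 0) /\ f m = X.

(* has_height X n : h(X) = n (finite). h(X) = infinity iff no n satisfies it. *)
Definition has_height (X : vert Q) (n : nat) : Prop :=
  (exists f, full_evolution X n f) /\
  (forall m f, full_evolution X m f -> n <= m).

Definition embeds (m : nat) (f : nat -> vert Q) (n : nat) (g : nat -> vert Q) : Prop :=
  m <= n /\
  exists r : nat -> nat,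
    (forall k, k < m -> r k < r (S k)) /\ r m <= n /\
    (forall k, k <= m -> isotypic (f k) (g (r k))).

Definition universal_evolution (X : vert Q) (m : nat) (f : nat -> vert Q) : Prop :=
  full_evolution X m f /\
  (forall n g, full_evolution X n g -> embeds m f n g).

Definition phylogenetic_vertex (X : vert Q) : Prop :=
  exists m f, universal_evolution X m f.

(* h(A) >= h(B), with the convention that infinity is the largest value *)
Definition height_ge (A B : vert Q) : Prop :=
  forall n, has_height A n -> exists m, has_height B m /\ m <= n.

Definition monotonous : Prop :=
  forall A B, edge Q A B -> height_ge A B.

(* Smallness is automatic in type theory (vertices form a type). *)
Definition phylogenetic_quiver : Prop :=
  monotonous /\ forall X, phylogenetic_vertex X.

(* parent B D : p([B]) = [D], via a universal evolution of B of length >= 1 *)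
Definition parent (B D : vert Q) : Prop :=
  exists l f, universal_evolution B l f /\ 1 <= l /\ isotypic (f (l - 1)) D.

Fixpoint parent_iter (k : nat) (B C : vert Q) : Prop :=
  match k with
  | 0 => isotypic B C
  | S k' => exists D, parent B D /\ parent_iter k' D C
  end.

End Q.

Definition clade (Q : quiver) (A : vert Q) : quiver :=
  {| vert := { B : vert Q | ancestor Q A B };
     edge := fun x y => edge Q (proj1_sig x) (proj1_sig y) |}.

From Stdlib Require Import Arith Lia ProofIrrelevance.

(* Iterating the parental map walks back along a universal evolution g of B:
   a universal evolution of a vertex isotypic to g j is termwise isotypic to
   the prefix of g up to j.  Hence g passes through the class of A at index m,
   and the tail of g from there lies in the clade and starts at a vertex that
   is primitive in the clade.  This tail is universal for B in the clade:
   prefixing a full evolution of B in the clade with a full evolution of A of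
   length m gives a full evolution of B in the whole quiver, into which g
   embeds, and heights force that embedding to send indices >= m into the
   appended part. *)

Lemma increasing_gap (r : nat -> nat) (M : nat) :
  (forall k, k < M -> r k < r (S k)) ->
  forall i j, i <= j <= M -> r i + (j - i) <= r j.
Proof.
  intros Hr i j. induction j as [|j IH]; intros Hij.
  - replace i with 0 by lia. lia.
  - destruct (Nat.eq_dec i (S j)) as [->|Hne]; [lia|].
    specialize (IH ltac:(lia)). specialize (Hr j ltac:(lia)). lia.
Qed.

Section Evolutions.
Variable Q : quiver.

Definition splice (m : nat) (a b : nat -> vert Q) : nat -> vert Q :=
  fun k => if k <=? m then a k else b (k - m).

Lemma splice_lo m a b k : k <= m -> splice m a b k = a k.
Proof. intros Hk. unfold splice. destruct (Nat.leb_spec k m); [reflexivity | lia]. Qed.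

Lemma splice_hi m a b k : a m = b 0 -> m <= k -> splice m a b k = b (k - m).
Proof.
  intros Hab Hk. unfold splice. destruct (Nat.leb_spec k m); [|reflexivity].
  replace k with m by lia. rewrite Nat.sub_diag. exact Hab.
Qed.

Lemma evolution_splice m1 m2 a b :
  evolution Q m1 a -> evolution Q m2 b -> a m1 = b 0 ->
  evolution Q (m1 + m2) (splice m1 a b).
Proof.
  intros Ha Hb Hab k Hk. unfold splice.
  destruct (Nat.leb_spec k m1); destruct (Nat.leb_spec (k - 1) m1); try lia.
  - apply Ha. lia.
  - replace k with (S m1) by lia. replace (S m1 - m1) with 1 by lia.
    replace (S m1 - 1) with m1 by lia. rewrite Hab. apply (Hb 1). lia.
  - replace (k - 1 - m1) with (k - m1 - 1) by lia. apply Hb. lia.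
Qed.

Lemma evolution_prefix M f i : evolution Q M f -> i <= M -> evolution Q i f.
Proof. intros Hf Hi k Hk. apply Hf. lia. Qed.

Lemma evolution_shift M f i :
  evolution Q M f -> i <= M -> evolution Q (M - i) (fun k => f (i + k)).
Proof.
  intros Hf Hi k Hk. replace (i + (k - 1)) with (i + k - 1) by lia. apply Hf. lia.
Qed.

Lemma ancestor_refl X : ancestor Q X X.
Proof. exists 0, (fun _ => X). repeat split. intros k Hk. lia. Qed.

Lemma ancestor_trans X Y Z : ancestor Q X Y -> ancestor Q Y Z -> ancestor Q X Z.
Proof.
  intros [m1 [a [Ha [Ha0 Ham]]]] [m2 [b [Hb [Hb0 Hbm]]]].
  exists (m1 + m2), (splice m1 a b).
  split; [apply evolution_splice; [exact Ha | exact Hb | congruence]|].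
  split; [exact Ha0|].
  rewrite splice_hi by (congruence || lia). now replace (m1 + m2 - m1) with m2 by lia.
Qed.

Lemma evolution_ancestor M f i j :
  evolution Q M f -> i <= j <= M -> ancestor Q (f i) (f j).
Proof.
  intros Hf Hij. exists (j - i), (fun k => f (i + k)).
  split; [apply evolution_shift; [apply (evolution_prefix M) |]; auto; lia|].
  split; f_equal; lia.
Qed.

Lemma isotypic_refl X : isotypic Q X X.
Proof. split; apply ancestor_refl. Qed.

Lemma isotypic_sym X Y : isotypic Q X Y -> isotypic Q Y X.
Proof. intros [H1 H2]. split; assumption. Qed.

Lemma isotypic_trans X Y Z : isotypic Q X Y -> isotypic Q Y Z -> isotypic Q X Z.
Proof. intros [H1 H2] [H3 H4]. split; eapply ancestor_trans; eassumption. Qed.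

Lemma embeds_ext M f f' N g :
  (forall k, k <= M -> f k = f' k) -> embeds Q M f N g -> embeds Q M f' N g.
Proof.
  intros Hff' [HMN [r [Hr1 [Hr2 Hr3]]]]. split; [exact HMN|].
  exists r. split; [exact Hr1 | split; [exact Hr2|]].
  intros i Hi. rewrite <- Hff' by exact Hi. exact (Hr3 i Hi).
Qed.

Lemma full_evolution_splice X m a k b :
  full_evolution Q X m a -> evolution Q k b -> b 0 = X ->
  full_evolution Q (b k) (m + k) (splice m a b).
Proof.
  intros [Ha [Hprim Ham]] Hb Hb0.
  split; [apply evolution_splice; [exact Ha | exact Hb | congruence]|].
  split; [exact Hprim|].
  rewrite splice_hi by (congruence || lia). now replace (m + k - m) with k by lia.
Qed.

Lemma has_height_unique X a b : has_height Q X a -> has_height Q X b -> a = b.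
Proof.
  intros [[f Hf] Ha] [[g Hg] Hb]. specialize (Ha _ _ Hg). specialize (Hb _ _ Hf). lia.
Qed.

Lemma universal_evolution_has_height X l f :
  universal_evolution Q X l f -> has_height Q X l.
Proof.
  intros [Hf Hu]. split; [exists f; exact Hf|].
  intros k e He. exact (proj1 (Hu k e He)).
Qed.

Lemma universal_evolution_full_prefix X l f i :
  universal_evolution Q X l f -> i <= l -> full_evolution Q (f i) i f.
Proof.
  intros [[Hf [Hprim _]] _] Hi.
  split; [exact (evolution_prefix l f i Hf Hi) | split; [exact Hprim | reflexivity]].
Qed.

Lemma universal_evolution_prefix_height X l f i :
  universal_evolution Q X l f -> i <= l -> has_height Q (f i) i.
Proof.
  intros Hu Hi. split; [exists f; exact (universal_evolution_full_prefix X l f i Hu Hi)|].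
  intros k e He.
  pose proof Hu as [[Hf [_ Hfl]] _].
  assert (Hsuffix : evolution Q (l - i) (fun t => f (i + t))) by (apply evolution_shift; auto).
  assert (Hfull := full_evolution_splice (f i) k e (l - i) _ He Hsuffix
                 ltac:(cbv beta; rewrite Nat.add_0_r; reflexivity)).
  cbv beta in Hfull. replace (i + (l - i)) with l in Hfull by lia. rewrite Hfl in Hfull.
  pose proof (proj2 (universal_evolution_has_height X l f Hu) _ _ Hfull). lia.
Qed.

(* Every vertex of q lies between q 0 and an isotype of q 0, hence is isotypic to it. *)
Lemma splice_isotypic_prefix j g s q t :
  evolution Q s q -> g j = q 0 -> isotypic Q (q s) (q 0) -> t <= j + s ->
  isotypic Q (splice j g q t) (g (Nat.min t j)).
Proof.
  intros Hq Hgq [Hsq H0s] Ht. destruct (Nat.le_gt_cases t j).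
  - rewrite splice_lo, Nat.min_l by lia. apply isotypic_refl.
  - rewrite splice_hi, Nat.min_r, Hgq by (exact Hgq || lia). split.
    + apply (ancestor_trans _ (q s)); [apply (evolution_ancestor s); auto; lia | exact Hsq].
    + apply (evolution_ancestor s); auto; lia.
Qed.

Lemma universal_suffix_embeds B n g m k e :
  universal_evolution Q B n g -> m <= n -> has_height Q (e 0) m ->
  evolution Q k e -> e k = B ->
  embeds Q (n - m) (fun i => g (m + i)) k e.
Proof.
  intros Hg Hmn [[a Ha] _] He HeB.
  assert (Hfull := full_evolution_splice (e 0) m a k e Ha He eq_refl).
  rewrite HeB in Hfull.
  pose proof (proj2 (universal_evolution_has_height B n g Hg) _ _ Hfull) as Hnk.
  destruct (proj2 Hg _ _ Hfull) as [_ [r [Hr1 [Hr2 Hr3]]]].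
  assert (Hgap := increasing_gap r n Hr1).
  assert (Hrm : forall i, i <= n - m -> m + i <= r (m + i))
    by (intros i Hi; specialize (Hgap 0 (m + i) ltac:(lia)); lia).
  assert (Ham : a m = e 0) by apply Ha.
  split; [lia|]. exists (fun i => r (m + i) - m). split; [|split].
  - intros i Hi. rewrite Nat.add_succ_r.
    specialize (Hr1 (m + i) ltac:(lia)). specialize (Hrm i ltac:(lia)). lia.
  - replace (m + (n - m)) with n by lia. lia.
  - intros i Hi. specialize (Hr3 (m + i) ltac:(lia)).
    rewrite splice_hi in Hr3 by (exact Ham || specialize (Hrm i Hi); lia).
    exact Hr3.
Qed.

Lemma height_ge_refl X : height_ge Q X X.
Proof. intros n Hn. exists n. auto. Qed.

Lemma height_ge_trans X Y Z : height_ge Q X Y -> height_ge Q Y Z -> height_ge Q X Z.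
Proof.
  intros H1 H2 n Hn. destruct (H1 n Hn) as [m [Hm Hmn]]. destruct (H2 m Hm) as [k [Hk Hkm]].
  exists k. split; [exact Hk | lia].
Qed.

Section Monotonous.
Hypothesis HM : monotonous Q.

Lemma ancestor_height_ge X Y : ancestor Q X Y -> height_ge Q Y X.
Proof.
  intros [M [f [Hf [<- <-]]]].
  assert (Hk : forall k, k <= M -> height_ge Q (f k) (f 0)).
  { induction k as [|k IH]; intros Hk; [apply height_ge_refl|].
    assert (Hedge := Hf (S k) ltac:(lia)). replace (S k - 1) with k in Hedge by lia.
    apply (height_ge_trans _ (f k)); [exact (HM _ _ Hedge) | apply IH; lia]. }
  exact (Hk M (le_n M)).
Qed.

Lemma ancestor_height_le X Y a b :
  ancestor Q X Y -> has_height Q X a -> has_height Q Y b -> a <= b.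
Proof.
  intros HXY Ha Hb. destruct (ancestor_height_ge X Y HXY b Hb) as [a' [Ha' Hle]].
  rewrite (has_height_unique X a a' Ha Ha'). exact Hle.
Qed.

Lemma isotypic_has_height X Y a : isotypic Q X Y -> has_height Q X a -> has_height Q Y a.
Proof.
  intros [HXY HYX] Ha.
  destruct (ancestor_height_ge Y X HYX a Ha) as [b [Hb Hba]].
  pose proof (ancestor_height_le X Y a b HXY Ha Hb).
  now replace a with b by lia.
Qed.

Lemma universal_evolution_isotypic_prefix B n g C l f j :
  universal_evolution Q B n g -> universal_evolution Q C l f ->
  isotypic Q C (g j) -> j <= n ->
  l = j /\ forall i, i <= l -> isotypic Q (f i) (g i).
Proof.
  intros Hg Hf HCg Hj.
  assert (Hgj := universal_evolution_prefix_height B n g j Hg Hj).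
  assert (HC := isotypic_has_height _ _ _ (isotypic_sym _ _ HCg) Hgj).
  assert (Hl : l = j)
    by exact (has_height_unique C l j (universal_evolution_has_height C l f Hf) HC).
  subst l. split; [reflexivity|].
  pose proof HCg as [_ [s [q [Hq [Hq0 Hqs]]]]].
  assert (Hfull := full_evolution_splice (g j) j g s q
                     (universal_evolution_full_prefix B n g j Hg Hj) Hq Hq0).
  rewrite Hqs in Hfull.
  destruct (proj2 Hf _ _ Hfull) as [_ [r [Hr1 [Hr2 Hr3]]]].
  intros i Hi.
  assert (Hri : r i <= j + s) by (pose proof (increasing_gap r j Hr1 i j ltac:(lia)); lia).
  assert (Hiso := isotypic_trans _ _ _ (Hr3 i Hi)
                    (splice_isotypic_prefix j g s q (r i) Hq (eq_sym Hq0)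
                       ltac:(rewrite Hqs, Hq0; exact HCg) Hri)).
  assert (Hmin : Nat.min (r i) j = i).
  { apply (has_height_unique (g (Nat.min (r i) j)));
      [apply (universal_evolution_prefix_height B n g); [exact Hg | lia] |].
    exact (isotypic_has_height _ _ _ Hiso (universal_evolution_prefix_height C j f i Hf Hi)). }
  rewrite Hmin in Hiso. exact Hiso.
Qed.

Lemma parent_iter_universal B n g k :
  universal_evolution Q B n g ->
  forall j C X, j <= n -> k <= j -> isotypic Q C (g j) -> parent_iter Q k C X ->
  isotypic Q X (g (j - k)).
Proof.
  intros Hg. induction k as [|k IH]; intros j C X Hj Hk HC Hpar.
  - rewrite Nat.sub_0_r. exact (isotypic_trans _ _ _ (isotypic_sym _ _ Hpar) HC).
  - destruct Hpar as [D [[l [f [Hf [Hl HD]]]] Hpar]].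
    destruct (universal_evolution_isotypic_prefix B n g C l f j Hg Hf HC Hj) as [-> Hfg].
    replace (j - S k) with (j - 1 - k) by lia.
    apply (IH (j - 1) D); [lia | lia | | exact Hpar].
    exact (isotypic_trans _ _ _ (isotypic_sym _ _ HD) (Hfg (j - 1) ltac:(lia))).
Qed.

End Monotonous.
End Evolutions.

Section Clade.
Variables (Q : quiver) (A : vert Q).

Lemma clade_vert_eq (x y : vert (clade Q A)) : proj1_sig x = proj1_sig y -> x = y.
Proof.
  destruct x as [x Hx], y as [y Hy]. simpl. intros ->. f_equal. apply proof_irrelevance.
Qed.

Lemma clade_ancestor_val (x y : vert (clade Q A)) :
  ancestor (clade Q A) x y -> ancestor Q (proj1_sig x) (proj1_sig y).
Proof.
  intros [M [f [Hf [<- <-]]]]. exists M, (fun k => proj1_sig (f k)). repeat split. exact Hf.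
Qed.

(* Indices beyond M are clamped so that every term carries a proof of A <= f k. *)
Lemma clade_evolution_lift M (f : nat -> vert Q) :
  evolution Q M f -> ancestor Q A (f 0) ->
  exists f' : nat -> vert (clade Q A),
    evolution (clade Q A) M f' /\ forall k, k <= M -> proj1_sig (f' k) = f k.
Proof.
  intros Hf HA.
  assert (Hanc : forall k, ancestor Q A (f (Nat.min k M)))
    by (intro k; apply (ancestor_trans Q _ (f 0));
        [exact HA | apply (evolution_ancestor Q M); auto; lia]).
  exists (fun k => exist _ (f (Nat.min k M)) (Hanc k)). split.
  - intros k Hk. change (edge Q (f (Nat.min k M)) (f (Nat.min (k - 1) M))).
    rewrite !Nat.min_l by lia. apply Hf. exact Hk.
  - intros k Hk. simpl. now rewrite Nat.min_l.
Qed.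

Lemma clade_ancestor_of_val (x y : vert (clade Q A)) :
  ancestor Q (proj1_sig x) (proj1_sig y) -> ancestor (clade Q A) x y.
Proof.
  intros [M [f [Hf [H0 HM]]]].
  destruct (clade_evolution_lift M f Hf) as [f' [Hf' Hval]]; [rewrite H0; exact (proj2_sig x)|].
  exists M, f'. split; [exact Hf'|].
  split; apply clade_vert_eq; rewrite Hval by lia; assumption.
Qed.

Lemma clade_isotypic_of_val (x y : vert (clade Q A)) :
  isotypic Q (proj1_sig x) (proj1_sig y) -> isotypic (clade Q A) x y.
Proof. intros [H1 H2]. split; apply clade_ancestor_of_val; assumption. Qed.

Lemma clade_embeds_of_val M (f : nat -> vert (clade Q A)) N g :
  embeds Q M (fun k => proj1_sig (f k)) N (fun k => proj1_sig (g k)) ->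
  embeds (clade Q A) M f N g.
Proof.
  intros [HMN [r [Hr1 [Hr2 Hr3]]]]. split; [exact HMN|].
  exists r. split; [exact Hr1 | split; [exact Hr2|]].
  intros k Hk. apply clade_isotypic_of_val, Hr3, Hk.
Qed.

Definition clade_root : vert (clade Q A) := exist _ A (ancestor_refl Q A).

Lemma clade_primitive_iff (x : vert (clade Q A)) :
  primitive (clade Q A) x <-> isotypic Q A (proj1_sig x).
Proof.
  split.
  - intros Hprim.
    destruct (Hprim clade_root (clade_ancestor_of_val clade_root x (proj2_sig x))) as [H1 H2].
    split; [exact (clade_ancestor_val _ _ H1) | exact (clade_ancestor_val _ _ H2)].
  - intros [HAx HxA] y Hyx. apply clade_isotypic_of_val.
    split; [exact (clade_ancestor_val y x Hyx)|].
    exact (ancestor_trans Q _ A _ HxA (proj2_sig y)).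
Qed.

Lemma clade_universal_suffix (HM : monotonous Q) (B : vert (clade Q A)) n g m :
  universal_evolution Q (proj1_sig B) n g -> m <= n ->
  has_height Q A m -> isotypic Q A (g m) ->
  exists h, universal_evolution (clade Q A) B (n - m) h.
Proof.
  intros Hg Hmn hA HAg.
  assert (Hgn : g n = proj1_sig B) by exact (proj2 (proj2 (proj1 Hg))).
  destruct (clade_evolution_lift (n - m) (fun k => g (m + k))) as [h [Hh Hval]].
  { apply evolution_shift; [exact (proj1 (proj1 Hg)) | exact Hmn]. }
  { rewrite Nat.add_0_r. exact (proj1 HAg). }
  exists h. split; [split; [exact Hh | split]|].
  - apply clade_primitive_iff. rewrite Hval, Nat.add_0_r by lia. exact HAg.
  - apply clade_vert_eq. rewrite Hval, <- Hgn by lia. f_equal. lia.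
  - intros k e [He [Hprim HeB]]. apply clade_embeds_of_val.
    apply (embeds_ext Q _ (fun i => g (m + i))); [intros i Hi; symmetry; apply Hval, Hi|].
    apply (universal_suffix_embeds Q (proj1_sig B) n g m k); auto.
    + exact (isotypic_has_height Q HM A _ m (proj1 (clade_primitive_iff (e 0)) Hprim) hA).
    + now rewrite HeB.
Qed.

End Clade.

Theorem lemma9p5 (Q : quiver) (HQ : phylogenetic_quiver Q)
  (A : vert Q) (B : vert (clade Q A)) (m n : nat)
  (hA : has_height Q A m) (hB : has_height Q (proj1_sig B) n)
  (hp : parent_iter Q (n - m) (proj1_sig B) A) :
  phylogenetic_vertex (clade Q A) B /\ has_height (clade Q A) B (n - m).
Proof.
  destruct HQ as [HM Hphylo].
  destruct (Hphylo (proj1_sig B)) as [l [g Hg]].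
  assert (Hl : l = n)
    by exact (has_height_unique Q _ l n (universal_evolution_has_height Q _ l g Hg) hB).
  subst l.
  assert (Hmn : m <= n) by exact (ancestor_height_le Q HM A _ m n (proj2_sig B) hA hB).
  assert (HAg : isotypic Q A (g m)).
  { replace m with (n - (n - m)) by lia.
    apply (parent_iter_universal Q HM (proj1_sig B) n g (n - m) Hg n (proj1_sig B));
      [lia | lia | | exact hp].
    rewrite (proj2 (proj2 (proj1 Hg))). apply isotypic_refl. }
  destruct (clade_universal_suffix Q A HM B n g m Hg Hmn hA HAg) as [h Hh].
  split; [exists (n - m), h; exact Hh | exact (universal_evolution_has_height _ _ _ _ Hh)].
Qed.
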